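(* For every $n\ge1$, $$\text{(a)}\quad r_nx_1=q^{1/2}s_ny_1+r_{n-1}x_2,\qquad\text{(b)}\quad x_2s_n=r_{n-1}+q^{-1/2}M[1,0,1,1]\,s_{n-1}.$$
   Context: Based quantum torus: basis $M[a]$, $a\in\mathbb{Z}^4$, $M[a]M[b]=q^{\frac12a^T\Lambda b}M[a+b]$ with $\Lambda=\begin{pmatrix}0&0&-1&0\\0&0&0&-1\\1&0&0&-2\\0&1&2&0\end{pmatrix}$; $x_1=M[e_1],x_2=M[e_2],y_1=M[e_3],y_2=M[e_4]$. Snake graphs: for $n\ge0$, $\mathcal G_n$ is a horizontal row of $2n+1$ unit square tiles $G_{-n},\dots,G_n$ (left to right, consecutive tiles sharing a vertical edge); $G_i$ has face weight $1$ if $i+n$ is even and face weight $2$ if $i+n$ is odd. The top and bottom edges of a tile of face weight $1$ have edge weight $2$; the top and bottom edges of a tile of face weight $2$ have edge weight $1$; vertical edges carry no weight. $\mathcal H_n$ is obtained from $\mathcal G_n$ by deleting the rightmost tile $G_n$ (keeping the tiles $H_i:=G_i$, $-n\le i\le n-1$, and their edges); $\mathcal H_0$ is a single vertical edge. The minimal perfect matching $P_{min}$ of $\mathcal G_n$ consists of the top and bottom edges of all tiles of face weight $1$; that of $\mathcal H_n$ ($n\ge1$) consists of the top and bottom edges of its tiles of face weight $1$ together with its rightmost vertical edge. For a perfect matching $P$, $\mathrm{Twist}(P)$ is the set of tiles in the interior of cycles of $P\triangle P_{min}$, $y_i(P)$ the number of twisted tiles of face weight $i$, and $a_i(P)$ the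 number of edges of $P$ of edge weight $i$. Set $\nu(P)=(a_1(P)-N_1,\,a_2(P)-N_2,\,y_1(P),\,y_2(P))\in\mathbb{Z}^4$, where $N_i$ is the number of tiles of face weight $i$ (for $\mathcal G_n$: $N_1=n+1,N_2=n$; for $\mathcal H_n$: $N_1=N_2=n$). Tile exponents: in $\mathcal G_n$, $\alpha(G_i)=i/2$ if $G_i$ has face weight $1$ and $-i/2$ if weight $2$; in $\mathcal H_n$, $\alpha(H_i)=(i+1)/2$ if $H_i$ has face weight $1$ and $-i/2$ if weight $2$. $\alpha(P)=\sum_{G\in\mathrm{Twist}(P)}\alpha(G)$. Finally $r_n=\sum_{P\models\mathcal G_n}q^{\alpha(P)}M[\nu(P)]$ and $s_n=\sum_{P\models\mathcal H_n}q^{\alpha(P)}M[\nu(P)]$ (sums over perfect matchings). *)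

From HB Require Import structures.
From mathcomp Require Import all_boot all_order all_algebra.
Set Implicit Arguments. Unset Strict Implicit. Unset Printing Implicit Defensive.
Import Order.TTheory GRing.Theory Num.Theory.

(* Based quantum torus over Z[q^{+-1/2}].  We write v := q^{1/2}.      *)
(* An element is represented by a finite list of terms (c, (k, a))     *)
(* standing for c * v^k * M[a], c : int, k : int, a : Z^4; two lists   *)
(* denote the same element iff all coefficients agree (qeq).          *)

Definition vec4 := (int * int * int * int)%type.
Definition term := (int * (int * vec4))%type.
Definition qt := seq term.

Definition vadd (a b : vec4) : vec4 :=
  let: (a1, a2, a3, a4) := a in let: (b1, b2, b3, b4) := b in
  (a1 + b1, a2 + b2, a3 + b3, a4 + b4)%R.

(* a^T Lambda b, Lambda = [[0,0,-1,0],[0,0,0,-1],[1,0,0,-2],[0,1,2,0]] *)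
Definition lam (a b : vec4) : int :=
  let: (a1, a2, a3, a4) := a in let: (b1, b2, b3, b4) := b in
  (- (a1 * b3) - a2 * b4 + a3 * b1 - 2 * (a3 * b4) + a4 * b2 + 2 * (a4 * b3))%R.

(* M[a] M[b] = q^{1/2 a^T Lambda b} M[a+b] = v^{a^T Lambda b} M[a+b] *)
Definition tmul (x y : term) : term :=
  ((x.1 * y.1)%R, ((x.2.1 + y.2.1 + lam x.2.2 y.2.2)%R, vadd x.2.2 y.2.2)).

Definition qmul (X Y : qt) : qt := [seq tmul x y | x <- X, y <- Y].
Definition qadd (X Y : qt) : qt := X ++ Y.

Definition qcoef (X : qt) (k : int) (a : vec4) : int :=
  (\sum_(x <- X | (x.2.1 == k) && (x.2.2 == a)) x.1)%R.

Definition qeq (X Y : qt) : Prop := forall k a, qcoef X k a = qcoef Y k a.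

Definition mono (k : int) (a : vec4) : qt := [:: (1%R, (k, a))].
Definition M (a : vec4) : qt := mono 0 a.
Definition qhalf : qt := mono 1 (0, 0, 0, 0)%R.
Definition qmhalf : qt := mono (-1) (0, 0, 0, 0)%R.
Definition x1 : qt := M (1, 0, 0, 0)%R.
Definition x2 : qt := M (0, 1, 0, 0)%R.
Definition y1 : qt := M (0, 0, 1, 0)%R.
Definition y2 : qt := M (0, 0, 0, 1)%R.

(* Horizontal snake graph with m unit tiles 0..m-1 (left to right).    *)
(* Vertices: (column c, top?) with c in 0..m.                          *)
(* Edges: inl c = vertical edge at column c;                           *)
(*        inr (inl t) = top edge of tile t; inr (inr t) = bottom edge. *)
(* Tile t of G_n (m = 2n+1) is G_{t-n}; tile t of H_n (m = 2n) is      *)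
(* H_{t-n}.  Since i+n = t, tile t has face weight 1 iff t is even.    *)

Definition edge (m : nat) := ('I_m.+1 + ('I_m + 'I_m))%type.
Definition vertex (m : nat) := ('I_m.+1 * bool)%type.

Definition incident (m : nat) (e : edge m) (x : vertex m) : bool :=
  match e with
  | inl c => val c == val x.1
  | inr (inl t) => x.2 && ((val x.1 == val t) || (val x.1 == (val t).+1))
  | inr (inr t) => ~~ x.2 && ((val x.1 == val t) || (val x.1 == (val t).+1))
  end.

Definition perfect (m : nat) (P : {set edge m}) : bool :=
  [forall x : vertex m, #|[set e in P | incident e x]| == 1%N].

Definition fw (t : nat) : nat := if odd t then 2 else 1.

Definition ew (m : nat) (e : edge m) : nat :=
  match e with
  | inl _ => 0
  | inr (inl t) | inr (inr t) => if fw t == 1%N then 2 else 1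
  end.

Definition Pmin (m : nat) (withLast : bool) : {set edge m} :=
  [set e : edge m | match e with
                    | inl c => withLast && (val c == m)
                    | inr (inl t) | inr (inr t) => fw t == 1%N
                    end].

Definition rect_bd (m : nat) (j k : nat) : {set edge m} :=
  [set e : edge m | match e with
                    | inl c => (val c == j) || (val c == k.+1)
                    | inr (inl t) | inr (inr t) => (j <= val t <= k)%N
                    end].

Definition symdiff (T : finType) (A B : {set T}) : {set T} := (A :\: B) :|: (B :\: A).

(* tiles enclosed by a cycle of P (symdiff) Pmin; the cycles of the
   (ladder) snake graph are exactly the rectangle boundaries rect_bd j k *)
Definition Twist (m : nat) (Pm P : {set edge m}) : {set 'I_m} :=
  [set t : 'I_m | [exists j : 'I_m, exists k : 'I_m,
      ((j <= t <= k)%N) && (rect_bd m j k \subset symdiff P Pm)]].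

Definition ycount (m : nat) (Pm P : {set edge m}) (w : nat) : nat :=
  #|[set t in Twist Pm P | fw t == w]|.
Definition acount (m : nat) (P : {set edge m}) (w : nat) : nat :=
  #|[set e in P | ew e == w]|.
Definition Ntiles (m : nat) (w : nat) : nat := #|[set t : 'I_m | fw t == w]|.

Definition nu (m : nat) (Pm P : {set edge m}) : vec4 :=
  ((acount P 1)%:Z - (Ntiles m 1)%:Z, (acount P 2)%:Z - (Ntiles m 2)%:Z,
   (ycount Pm P 1)%:Z, (ycount Pm P 2)%:Z)%R.

(* alpha2 = 2 * alpha (so that q^{alpha} = v^{alpha2}) *)
Definition snake_sum (m : nat) (withLast : bool) (alpha2 : nat -> int) : qt :=
  [seq (1%R, ((\sum_(t in Twist (Pmin m withLast) P) alpha2 (val t))%R,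
              nu (Pmin m withLast) P))
  | P <- enum [pred P : {set edge m} | perfect P]].

(* G_n: alpha(G_i) = i/2 (weight 1), -i/2 (weight 2), i = t - n *)
Definition alphaG2 (n t : nat) : int :=
  if fw t == 1%N then (t%:Z - n%:Z)%R else (n%:Z - t%:Z)%R.
(* H_n: alpha(H_i) = (i+1)/2 (weight 1), -i/2 (weight 2), i = t - n *)
Definition alphaH2 (n t : nat) : int :=
  if fw t == 1%N then (t%:Z - n%:Z + 1)%R else (n%:Z - t%:Z)%R.

Definition r (n : nat) : qt := snake_sum (n.*2.+1) false (alphaG2 n).
Definition s (n : nat) : qt := snake_sum (n.*2) true (alphaH2 n).

From HB Require Import structures.
From mathcomp Require Import all_boot all_order all_algebra zify.
Set Implicit Arguments. Unset Strict Implicit. Unset Printing Implicit Defensive.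
Import Order.TTheory GRing.Theory Num.Theory.

(* A perfect matching of a one-row snake graph is determined by the tiles whose top
   and bottom edges it uses: these tiles are pairwise non-adjacent, the vertical edges
   are then forced, and every set of pairwise non-adjacent tiles arises this way.  The
   cycles of P (+) Pmin bound the maximal runs of tiles on which P and Pmin disagree, so
   the twisted tiles are exactly those where the two bit sequences differ, and the
   monomial of P is an explicit function of its bit sequence.  A sequence of length
   k+2 without adjacent ones ends either in 0 or in 01, after such a sequence of length
   k+1 or k.  Splitting r_(n+1) and s_(n+1) accordingly, both identities hold summand
   by summand, each by a direct computation in the quantum torus. *)

Lemma card_set_sum (T : finType) (p : pred T) : #|[set x | p x]| = \sum_x p x.
Proof. by rewrite -sum1dep_card big_mkcond; apply: eq_bigr => x _; case: (p x). Qed.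

Lemma sum_ord_at k (f : nat -> bool) (c : nat) : (forall t, k <= t -> f t = false) ->
  \sum_(i < k) (f i && (i == c :> nat)) = f c.
Proof.
move=> f_out; case: (ltnP c k) => [lt_ck | le_kc].
  rewrite (bigD1 (Ordinal lt_ck)) //= eqxx andbT big1 ?addn0 // => i.
  by rewrite -val_eqE /= => /negbTE->; rewrite andbF.
rewrite f_out // big1 // => i _.
by rewrite (ltn_eqF (leq_trans (ltn_ord i) le_kc)) andbF.
Qed.

Lemma sum_ord_adjacent k (f : nat -> bool) (c : nat) : (forall t, k <= t -> f t = false) ->
  \sum_(i < k) (f i && ((c == i) || (c == i.+1))) = f c + ((0 < c) && f c.-1).
Proof.
move=> f_out; rewrite -(sum_ord_at c f_out).
have -> : ((0 < c) && f c.-1 : nat) = \sum_(i < k) (f i && (i.+1 == c)).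
  case: c => [|c] /=; first by rewrite big1 // => i _; rewrite andbF.
  by rewrite -(sum_ord_at c f_out); apply: eq_bigr => i _; rewrite eqSS.
rewrite -big_split /=; apply: eq_bigr => i _; rewrite ![_ == c]eq_sym.
case: (f i) => //=.
by case: eqP => [->|_]; [rewrite (ltn_eqF (ltnSn i)) | case: (c == _)].
Qed.

Lemma sum_even_nat k : \sum_(0 <= t < k) ~~ odd t = uphalf k.
Proof.
elim: k => [|k IH]; first by rewrite big_geq.
by rewrite big_nat_recr //= IH uphalf_half; case: (odd k); rewrite /= ?addn1 ?addn0.
Qed.

Lemma sum_odd_nat k : \sum_(0 <= t < k) odd t = k./2.
Proof.
elim: k => [|k IH]; first by rewrite big_geq.
by rewrite big_nat_recr //= IH uphalf_half addnC.
Qed.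

Lemma in_symdiff (T : finType) (A B : {set T}) x :
  (x \in symdiff A B) = ((x \in A) != (x \in B)).
Proof. by rewrite /symdiff !inE; case: (x \in A); case: (x \in B). Qed.

Lemma perm_map_eq_in (T U : eqType) (f g : T -> U) (s : seq T) :
  {in s, f =1 g} -> perm_eq (map f s) (map g s).
Proof. by move/eq_in_map->. Qed.

(* A run of tiles on which two matchings differ ([d]) extends in both directions up to
   columns where their vertical edges differ ([e]). *)
Section Segment.
Variables (m : nat) (d e : nat -> bool).
Hypotheses (d_lt : forall t, d t -> t < m) (d0 : d 0 -> e 0).
Hypotheses (d_left : forall t, d t.+1 -> ~~ e t.+1 -> d t)
           (d_right : forall t, d t -> ~~ e t.+1 -> d t.+1).

Lemma segment_left t : d t ->
  exists2 j, j <= t & e j /\ forall i, j <= i <= t -> d i.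
Proof.
elim: t => [|t IH] dt.
  by exists 0 => //; split; [exact: d0 | case].
have [et | net] := boolP (e t.+1).
  by exists t.+1 => //; split=> // i; rewrite -eqn_leq => /eqP<-.
have [j le_jt [ej dj]] := IH (d_left dt net).
exists j; first exact: leqW.
split=> // i /andP[le_ji]; rewrite leq_eqVlt ltnS => /orP[/eqP-> //|le_it].
by apply: dj; rewrite le_ji.
Qed.

Lemma segment_right t : d t ->
  exists2 k, t <= k & e k.+1 /\ forall i, t <= i <= k -> d i.
Proof.
move=> dt; have := d_lt dt; move Hg : (m - t) => g; elim: g t Hg dt => [|g IH] t Hg dt lt_tm.
  by move: lt_tm; rewrite -subn_gt0 Hg.
have [et | net] := boolP (e t.+1).
  by exists t => //; split=> // i; rewrite -eqn_leq => /eqP<-.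
have dt1 := d_right dt net.
have [|k le_tk [ek dk]] := IH t.+1 _ dt1 (d_lt dt1); first by rewrite subnS Hg.
exists k; first exact: ltnW.
split=> // i /andP[]; rewrite leq_eqVlt => /orP[/eqP<- //|lt_ti le_ik].
by apply: dk; rewrite lt_ti.
Qed.

End Segment.

Definition indep_seq (s : seq bool) : Prop :=
  forall t, ~~ (nth false s t && nth false s t.+1).

Definition rcons01 (s : seq bool) := rcons (rcons s false) true.

Fixpoint enum_indep_rec (k : nat) : seq (seq bool) :=
  if k is k1.+1 then
    if k1 is k2.+1 then
      [seq rcons s false | s <- enum_indep_rec k1] ++
      [seq rcons01 s | s <- enum_indep_rec k2]
    else [:: [:: false]; [:: true]]
  else [:: [::]].

Fact enum_indep_key : unit. Proof. by []. Qed.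
Definition enum_indep := locked_with enum_indep_key enum_indep_rec.
Canonical enum_indep_unlockable := [unlockable fun enum_indep].

Lemma enum_indep0 : enum_indep 0 = [:: [::]].
Proof. by rewrite unlock. Qed.

Lemma enum_indep1 : enum_indep 1 = [:: [:: false]; [:: true]].
Proof. by rewrite unlock. Qed.

Lemma enum_indepSS k :
  enum_indep k.+2 =
  [seq rcons s false | s <- enum_indep k.+1] ++ [seq rcons01 s | s <- enum_indep k].
Proof. by rewrite unlock. Qed.

Lemma indep_seq_rcons s x : indep_seq (rcons s x) -> indep_seq s.
Proof.
have sub t : nth false s t -> nth false (rcons s x) t.
  by rewrite nth_rcons; case: ltnP => // le_st; rewrite nth_default.
by move=> ind t; apply: contra (ind t) => /andP[/sub-> /sub->].
Qed.

Lemma indep_seq_rcons_false s : indep_seq s -> indep_seq (rcons s false).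
Proof. by move=> ind t; rewrite !nth_rcons_default. Qed.

Lemma nth_rcons01 s t : nth false (rcons01 s) t = nth false s t || (t == (size s).+1).
Proof.
rewrite /rcons01 nth_rcons nth_rcons_default size_rcons.
case: ltngtP => [_|lt_st|->]; rewrite ?orbF ?orbT //.
by rewrite nth_default // (leq_trans (leqnSn _) (ltnW lt_st)).
Qed.

Lemma indep_seq_rcons01 s : indep_seq s -> indep_seq (rcons01 s).
Proof.
move=> ind t; rewrite !nth_rcons01 eqSS.
have [->|_] := eqVneq t (size s); first by rewrite !nth_default // (ltn_eqF (ltnSn _)).
by case: eqP => [->|_]; rewrite ?orbF // !nth_default // leqW.
Qed.

Lemma mem_enum_indep k s : s \in enum_indep k <-> size s = k /\ indep_seq s.
Proof.
elim/ltn_ind: k s => -[|[|k]] IH s.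
- rewrite enum_indep0 inE; split=> [/eqP-> | [/size0nil-> _]] //.
  by split=> // t; rewrite nth_nil.
- rewrite enum_indep1 !inE; split=> [/orP[]/eqP-> | [] ]; try by split=> // -[|[|t]].
  by case: s => [|x [|//]] // _ _; case: x.
have [IH1 IH0] := (IH k.+1 (ltnSn _), IH k (leqW (ltnSn _))).
rewrite enum_indepSS mem_cat; split.
  case/orP=> /mapP[x] => [/IH1 | /IH0] [size_x ind_x] ->.
    by rewrite size_rcons size_x; split=> //; apply: indep_seq_rcons_false.
  by rewrite !size_rcons size_x; split=> //; apply: indep_seq_rcons01.
case/lastP: s => [[]//|s b] [/eqP]; rewrite size_rcons eqSS => /eqP size_s ind.
case: b ind => ind; last first.
  by apply/orP; left; apply: map_f; apply/IH1; split=> //; apply: indep_seq_rcons ind.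
case/lastP: s size_s ind => [//|s b]; rewrite size_rcons => -[size_s] ind.
have b_false : b = false.
  apply/negbTE; apply: contra (ind (size s)) => b_true.
  by rewrite !nth_rcons !size_rcons !ltnSn !ltnn !eqxx /= b_true.
subst b; apply/orP; right; apply: map_f; apply/IH0; split=> //.
exact: indep_seq_rcons (indep_seq_rcons ind).
Qed.

Lemma enum_indep_uniq k : uniq (enum_indep k).
Proof.
elim/ltn_ind: k => -[|[|k]] IH; rewrite ?enum_indep0 ?enum_indep1 // enum_indepSS cat_uniq.
have rcons01_inj : injective rcons01.
  by move=> s1 s2 /(rcons_injl true)/(rcons_injl false).
rewrite !map_inj_uniq ?IH //; last exact: rcons_injl.
rewrite andbT /=; apply/hasPn => _ /mapP[s _ ->]; apply/mapP => -[s' _].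
by move/(congr1 (last false)); rewrite /rcons01 !last_rcons.
Qed.

Section Strip.
Variable m : nat.
Implicit Types (P Q : {set edge m}) (s : seq bool).

Definition vedge P (c : nat) : bool :=
  if insub c is Some i then (inl i : edge m) \in P else false.
Definition tedge P (t : nat) : bool :=
  if insub t is Some i then (inr (inl i) : edge m) \in P else false.
Definition bedge P (t : nat) : bool :=
  if insub t is Some i then (inr (inr i) : edge m) \in P else false.

Lemma vedgeE P (i : 'I_m.+1) : vedge P i = (inl i \in P).
Proof. by rewrite /vedge valK. Qed.
Lemma tedgeE P (i : 'I_m) : tedge P i = (inr (inl i) \in P).
Proof. by rewrite /tedge valK. Qed.
Lemma bedgeE P (i : 'I_m) : bedge P i = (inr (inr i) \in P).
Proof. by rewrite /bedge valK. Qed.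

Lemma vedge_out P c : m < c -> vedge P c = false.
Proof. by move=> lt_mc; rewrite /vedge insubF // ltnNge lt_mc. Qed.
Lemma tedge_out P t : m <= t -> tedge P t = false.
Proof. by move=> le_mt; rewrite /tedge insubF // ltnNge le_mt. Qed.
Lemma bedge_out P t : m <= t -> bedge P t = false.
Proof. by move=> le_mt; rewrite /bedge insubF // ltnNge le_mt. Qed.

Lemma card_incident P (c : 'I_m.+1) (top : bool) :
  #|[set e in P | incident e (c, top)]| =
  vedge P c + (if top then tedge P c + ((0 < c) && tedge P c.-1)
               else bedge P c + ((0 < c) && bedge P c.-1)).
Proof.
rewrite card_set_sum !big_sumType /=.
under eq_bigr do rewrite -vedgeE.
under [X in _ + (X + _)]eq_bigr do rewrite -tedgeE andbA.
under [X in _ + (_ + X)]eq_bigr do rewrite -bedgeE andbA.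
rewrite (sum_ord_at _ (@vedge_out P)).
rewrite (sum_ord_adjacent (f := fun t => tedge P t && top)) => [|t le_mt]; last first.
  by rewrite tedge_out.
rewrite (sum_ord_adjacent (f := fun t => bedge P t && ~~ top)) => [|t le_mt]; last first.
  by rewrite bedge_out.
by case: top; rewrite /= ?andbT ?andbF ?addn0.
Qed.

Definition column_ok P (c : nat) : bool :=
  (vedge P c + (tedge P c + ((0 < c) && tedge P c.-1)) == 1) &&
  (vedge P c + (bedge P c + ((0 < c) && bedge P c.-1)) == 1).

Lemma perfect_columnsP P : reflect (forall c, c <= m -> column_ok P c) (perfect P).
Proof.
apply: (iffP idP) => [/forallP match_P c le_cm | ok_P].
  have := match_P (Ordinal (le_cm : c < m.+1), false).
  have := match_P (Ordinal (le_cm : c < m.+1), true).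
  by rewrite /column_ok !card_incident /= => ok_top ok_bot; apply/andP.
apply/forallP => -[c top].
by have /andP[] := ok_P c (ltn_ord c); rewrite card_incident; case: top.
Qed.

Section Perfect.
Variable P : {set edge m}.
Hypothesis perfect_P : perfect P.

Lemma tedge_bedge t : tedge P t = bedge P t.
Proof.
have ok_P := elimT (perfect_columnsP P) perfect_P.
elim: t => [|t IH].
  case: (leqP m 0) => [le_m0 | _]; first by rewrite tedge_out // bedge_out.
  have /andP[] := ok_P 0 (leq0n m); rewrite /= !addn0.
  by case: (vedge P 0); case: (tedge P 0); case: (bedge P 0).
case: (leqP m t.+1) => [le_mt | lt_tm]; first by rewrite tedge_out // bedge_out.
have /andP[] := ok_P t.+1 (ltnW lt_tm); rewrite /= IH.
by case: (vedge P t.+1); case: (tedge P t.+1); case: (bedge P t.+1); case: (bedge P t).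
Qed.

Lemma vedge_forced c : c <= m ->
  vedge P c = ~~ tedge P c && ~~ ((0 < c) && tedge P c.-1).
Proof.
move=> le_cm; have /andP[/eqP] := elimT (perfect_columnsP P) perfect_P c le_cm.
by case: (vedge P c); case: (tedge P c); case: (_ && _).
Qed.

Lemma tedge_nonadjacent t : ~~ (tedge P t && tedge P t.+1).
Proof.
case: (leqP m t.+1) => [le_mt | lt_tm]; first by rewrite (tedge_out _ le_mt) andbF.
have /andP[/eqP] := elimT (perfect_columnsP P) perfect_P _ (ltnW lt_tm).
by rewrite /=; case: (vedge P t.+1); case: (tedge P t.+1); case: (tedge P t).
Qed.

End Perfect.

Section Twist.
Variables P Q : {set edge m}.
Hypotheses (perfect_P : perfect P) (perfect_Q : perfect Q).

Lemma tedge_differ_lt t : tedge P t != tedge Q t -> t < m.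
Proof. by apply: contraR; rewrite -leqNgt => le_mt; rewrite !tedge_out. Qed.

Lemma tedge_differ_left t : tedge P t.+1 != tedge Q t.+1 ->
  vedge P t.+1 = vedge Q t.+1 -> tedge P t != tedge Q t.
Proof.
move=> diff; have le_tm := ltnW (tedge_differ_lt diff).
move: diff (vedge_forced perfect_P le_tm) (vedge_forced perfect_Q le_tm).
move: (tedge_nonadjacent perfect_P t) (tedge_nonadjacent perfect_Q t) => /=.
by case: (tedge P t); case: (tedge Q t); case: (tedge P t.+1); case: (tedge Q t.+1)
  => // _ _ _ -> ->.
Qed.

Lemma tedge_differ_right t : tedge P t != tedge Q t ->
  vedge P t.+1 = vedge Q t.+1 -> tedge P t.+1 != tedge Q t.+1.
Proof.
move=> diff; have lt_tm := tedge_differ_lt diff.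
move: diff (vedge_forced perfect_P lt_tm) (vedge_forced perfect_Q lt_tm).
move: (tedge_nonadjacent perfect_P t) (tedge_nonadjacent perfect_Q t) => /=.
by case: (tedge P t); case: (tedge Q t); case: (tedge P t.+1); case: (tedge Q t.+1)
  => // _ _ _ -> ->.
Qed.

Lemma mem_Twist (t : 'I_m) : (t \in Twist Q P) = (tedge P t != tedge Q t).
Proof.
pose d i := tedge P i != tedge Q i; pose e c := vedge P c != vedge Q c.
have d0 : d 0 -> e 0.
  rewrite /d /e !vedge_forced //=.
  by case: (tedge P 0); case: (tedge Q 0).
have d_left i : d i.+1 -> ~~ e i.+1 -> d i.
  by move=> ? /negbNE/eqP; apply: tedge_differ_left.
have d_right i : d i -> ~~ e i.+1 -> d i.+1.
  by move=> ? /negbNE/eqP; apply: tedge_differ_right.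
rewrite inE; apply/existsP/idP => [[j /existsP[k /andP[/andP[le_jt le_tk]]]] | dt].
  move=> /subsetP/(_ (inr (inl t))); rewrite in_symdiff /rect_bd inE -!tedgeE.
  by apply; rewrite le_jt le_tk.
have [j le_jt [ej dj]] := segment_left d0 d_left dt.
have [k le_tk [ek dk]] := segment_right tedge_differ_lt d_right dt.
have lt_km : k < m by apply: tedge_differ_lt; apply: dk; rewrite le_tk leqnn.
exists (Ordinal (leq_ltn_trans le_jt (ltn_ord t))); apply/existsP; exists (Ordinal lt_km).
rewrite /= le_jt le_tk /=; apply/subsetP => -[c | [i | i]]; rewrite /rect_bd inE in_symdiff.
- by rewrite -!vedgeE => /orP[] /eqP->.
- rewrite -!tedgeE => /andP[le_ji le_ik]; case: (leqP i t) => [le_it | lt_ti].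
  + by apply: dj; rewrite le_ji le_it.
  + by apply: dk; rewrite le_ik ltnW.
- rewrite -!bedgeE -(tedge_bedge perfect_P) -(tedge_bedge perfect_Q).
  move=> /andP[le_ji le_ik]; case: (leqP i t) => [le_it | lt_ti].
  + by apply: dj; rewrite le_ji le_it.
  + by apply: dk; rewrite le_ik ltnW.
Qed.

End Twist.

Lemma tedge_Pmin withLast t : tedge (Pmin m withLast) t = (t < m) && ~~ odd t.
Proof.
case: (ltnP t m) => [lt_tm | le_mt]; last by rewrite tedge_out.
by rewrite (tedgeE _ (Ordinal lt_tm)) inE /fw; case: odd.
Qed.

Lemma bedge_Pmin withLast t : bedge (Pmin m withLast) t = (t < m) && ~~ odd t.
Proof.
case: (ltnP t m) => [lt_tm | le_mt]; last by rewrite bedge_out.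
by rewrite (bedgeE _ (Ordinal lt_tm)) inE /fw; case: odd.
Qed.

Lemma vedge_Pmin withLast c : c <= m -> vedge (Pmin m withLast) c = withLast && (c == m).
Proof. by move=> le_cm; rewrite (vedgeE _ (Ordinal (le_cm : c < m.+1))) inE. Qed.

Lemma perfect_Pmin : perfect (Pmin m (~~ odd m)).
Proof.
apply/perfect_columnsP => -[|c] le_cm.
  rewrite /column_ok vedge_Pmin // tedge_Pmin bedge_Pmin /=.
  by case: m => //= m'; rewrite andbF.
rewrite /column_ok vedge_Pmin // !tedge_Pmin !bedge_Pmin /= le_cm.
by case: (ltngtP c.+1 m) le_cm => // [_ _ | <- _] /=; rewrite ?andbF ?andbT; case: odd.
Qed.

Definition matching_of_seq s : {set edge m} :=
  [set e : edge m | match e with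
     | inl c => ~~ nth false s c && ~~ ((0 < val c) && nth false s (val c).-1)
     | inr (inl t) | inr (inr t) => nth false s t
     end].

Definition seq_of_matching P : seq bool := mkseq (tedge P) m.

Lemma size_seq_of_matching P : size (seq_of_matching P) = m.
Proof. exact: size_mkseq. Qed.

Lemma nth_seq_of_matching P t : nth false (seq_of_matching P) t = tedge P t.
Proof.
case: (ltnP t m) => [lt_tm | le_mt]; first by rewrite nth_mkseq.
by rewrite nth_default ?size_mkseq // tedge_out.
Qed.

Section MatchingOfSeq.
Variable s : seq bool.
Hypothesis size_s : size s = m.

Lemma tedge_matching_of_seq t : tedge (matching_of_seq s) t = nth false s t.
Proof.
case: (ltnP t m) => [lt_tm | le_mt]; last by rewrite tedge_out // nth_default // size_s.
by rewrite (tedgeE _ (Ordinal lt_tm)) inE.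
Qed.

Lemma bedge_matching_of_seq t : bedge (matching_of_seq s) t = nth false s t.
Proof.
case: (ltnP t m) => [lt_tm | le_mt]; last by rewrite bedge_out // nth_default // size_s.
by rewrite (bedgeE _ (Ordinal lt_tm)) inE.
Qed.

Lemma vedge_matching_of_seq c : c <= m ->
  vedge (matching_of_seq s) c = ~~ nth false s c && ~~ ((0 < c) && nth false s c.-1).
Proof. by move=> le_cm; rewrite (vedgeE _ (Ordinal (le_cm : c < m.+1))) inE. Qed.

Lemma perfect_matching_of_seq : indep_seq s -> perfect (matching_of_seq s).
Proof.
move=> ind_s; apply/perfect_columnsP => c le_cm.
rewrite /column_ok vedge_matching_of_seq // !tedge_matching_of_seq !bedge_matching_of_seq.
case: c le_cm => [|c] _ /=; first by case: nth.
by move: (ind_s c); case: (nth false s c); case: (nth false s c.+1).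
Qed.

Lemma seq_of_matchingK : seq_of_matching (matching_of_seq s) = s.
Proof.
apply: (@eq_from_nth _ false); first by rewrite size_seq_of_matching size_s.
by move=> i _; rewrite nth_seq_of_matching tedge_matching_of_seq.
Qed.

End MatchingOfSeq.

Lemma indep_seq_of_matching P : perfect P -> indep_seq (seq_of_matching P).
Proof. by move=> perfect_P t; rewrite !nth_seq_of_matching tedge_nonadjacent. Qed.

Lemma seq_of_matching_inj P Q : perfect P -> perfect Q ->
  seq_of_matching P = seq_of_matching Q -> P = Q.
Proof.
move=> perfect_P perfect_Q eqPQ.
have eq_tedge t : tedge P t = tedge Q t by rewrite -!nth_seq_of_matching eqPQ.
apply/setP => -[c | [i | i]].
- have le_cm : c <= m by rewrite -ltnS.
  by rewrite -!vedgeE !vedge_forced // !eq_tedge.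
- by rewrite -!tedgeE eq_tedge.
- by rewrite -!bedgeE -(tedge_bedge perfect_P) -(tedge_bedge perfect_Q) eq_tedge.
Qed.

Lemma perm_seq_of_matching :
  perm_eq [seq seq_of_matching P | P <- enum [pred P | perfect P]] (enum_indep m).
Proof.
apply: uniq_perm.
- rewrite map_inj_in_uniq ?enum_uniq // => P Q; rewrite !mem_enum.
  exact: seq_of_matching_inj.
- exact: enum_indep_uniq.
move=> s; apply/mapP/idP => [[P perfect_P ->] | /mem_enum_indep[size_s ind_s]].
  rewrite mem_enum in perfect_P; apply/mem_enum_indep.
  by split; [exact: size_seq_of_matching | exact: indep_seq_of_matching].
exists (matching_of_seq s); last by rewrite seq_of_matchingK.
by rewrite mem_enum; exact: perfect_matching_of_seq.
Qed.

End Strip.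

Definition count_at (p : nat -> bool -> bool) (s : seq bool) : nat :=
  \sum_(0 <= t < size s) p t (nth false s t).

Definition hor_odd := count_at (fun t x => odd t && x).
Definition hor_even := count_at (fun t x => ~~ odd t && x).
Definition vac_even := count_at (fun t x => ~~ odd t && ~~ x).

(* [Pmin] uses the horizontal edges of exactly the even tiles. *)
Definition twisted (t : nat) (x : bool) : bool := x != ~~ odd t.

Definition twist_sum (alpha2 : nat -> int) (s : seq bool) : int :=
  (\sum_(0 <= t < size s) (if twisted t (nth false s t) then alpha2 t else 0))%R.

Definition unit_term (k : int) (a : vec4) : term := (1%R, (k, a)).

Definition seq_nu (s : seq bool) : vec4 :=
  ((2 * hor_odd s)%:Z - (uphalf (size s))%:Z, (2 * hor_even s)%:Z - (size s)./2%:Z,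
   (vac_even s)%:Z, (hor_odd s)%:Z)%R.

Definition seq_term (alpha2 : nat -> int) (s : seq bool) : term :=
  unit_term (twist_sum alpha2 s) (seq_nu s).

Section MatchingTerm.
Variables (m : nat) (P : {set edge m}).
Hypothesis perfect_P : perfect P.

Lemma count_at_seq_of_matching p :
  count_at p (seq_of_matching P) = \sum_(i < m) p i (tedge P i).
Proof.
rewrite /count_at size_seq_of_matching big_mkord.
by apply: eq_bigr => i _; rewrite nth_seq_of_matching.
Qed.

Lemma sum_Twist_Pmin alpha2 :
  (\sum_(t in Twist (Pmin m (~~ odd m)) P) alpha2 (val t))%R
  = twist_sum alpha2 (seq_of_matching P).
Proof.
rewrite big_mkcond /twist_sum size_seq_of_matching big_mkord; apply: eq_bigr => i _.
by rewrite nth_seq_of_matching (mem_Twist perfect_P (perfect_Pmin m)) tedge_Pmin ltn_ord.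
Qed.

Lemma acount_perfect w : 0 < w ->
  acount P w = (\sum_(i < m) (tedge P i && ((if odd i then 1 else 2) == w))).*2.
Proof.
move=> w_gt0; rewrite /acount card_set_sum !big_sumType /=.
rewrite big1 => [|i _]; last by rewrite andbC; case: w w_gt0.
rewrite add0n -addnn; congr (_ + _); apply: eq_bigr => i _.
  by rewrite tedgeE /fw; case: odd.
by rewrite tedge_bedge // bedgeE /fw; case: odd.
Qed.

Lemma Ntiles_even : Ntiles m 1 = uphalf m.
Proof.
rewrite /Ntiles card_set_sum -sum_even_nat big_mkord.
by apply: eq_bigr => i _; rewrite /fw; case: odd.
Qed.

Lemma Ntiles_odd : Ntiles m 2 = m./2.
Proof.
rewrite /Ntiles card_set_sum -sum_odd_nat big_mkord.
by apply: eq_bigr => i _; rewrite /fw; case: odd.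
Qed.

Lemma ycount_Pmin w :
  ycount (Pmin m (~~ odd m)) P w = \sum_(i < m) (twisted i (tedge P i) && (fw i == w)).
Proof.
rewrite /ycount card_set_sum; apply: eq_bigr => i _.
by rewrite (mem_Twist perfect_P (perfect_Pmin m)) tedge_Pmin ltn_ord.
Qed.

Lemma nu_Pmin : nu (Pmin m (~~ odd m)) P = seq_nu (seq_of_matching P).
Proof.
rewrite /nu /seq_nu /hor_odd /hor_even /vac_even !count_at_seq_of_matching.
rewrite !acount_perfect // !ycount_Pmin Ntiles_even Ntiles_odd size_seq_of_matching.
rewrite -!mul2n; congr (_, _, _, _);
  [congr (Posz (2 * _) - _)%R | congr (Posz (2 * _) - _)%R | congr Posz | congr Posz];
  by apply: eq_bigr => i _; rewrite /twisted /fw; case: odd; case: tedge.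
Qed.

Lemma snake_term_Pmin alpha2 :
  (1%R, ((\sum_(t in Twist (Pmin m (~~ odd m)) P) alpha2 (val t))%R,
         nu (Pmin m (~~ odd m)) P))
  = seq_term alpha2 (seq_of_matching P).
Proof. by rewrite sum_Twist_Pmin nu_Pmin. Qed.

End MatchingTerm.

Lemma perm_snake_sum m withLast alpha2 : withLast = ~~ odd m ->
  perm_eq (snake_sum m withLast alpha2) [seq seq_term alpha2 s | s <- enum_indep m].
Proof.
move->; apply: perm_trans (perm_map (seq_term alpha2) (perm_seq_of_matching m)).
rewrite -map_comp; apply: perm_map_eq_in => P; rewrite mem_enum => perfect_P /=.
exact: snake_term_Pmin.
Qed.

Lemma count_at_rcons p s x : count_at p (rcons s x) = count_at p s + p (size s) x.
Proof.
rewrite /count_at size_rcons big_nat_recr //= nth_rcons ltnn eqxx; congr (_ + _).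
by apply: eq_big_nat => t /andP[_ lt_ts]; rewrite nth_rcons lt_ts.
Qed.

Lemma twist_sum_rcons alpha2 s x :
  twist_sum alpha2 (rcons s x) =
  (twist_sum alpha2 s + (if twisted (size s) x then alpha2 (size s) else 0))%R.
Proof.
rewrite /twist_sum size_rcons big_nat_recr //= nth_rcons ltnn eqxx; congr (_ + _)%R.
by apply: eq_big_nat => t /andP[_ lt_ts]; rewrite nth_rcons lt_ts.
Qed.

Lemma hor_even_vac_even s : hor_even s + vac_even s = uphalf (size s).
Proof.
rewrite /hor_even /vac_even /count_at -big_split -sum_even_nat /=.
by apply: eq_bigr => t _; case: odd; case: nth.
Qed.

Lemma Posz_sum_nat k (F : nat -> nat) :
  Posz (\sum_(0 <= t < k) F t) = (\sum_(0 <= t < k) Posz (F t))%R.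
Proof. exact: (big_morph Posz PoszD erefl). Qed.

Lemma twist_sum_alphaH2 n s :
  twist_sum (alphaH2 n) s = (twist_sum (alphaG2 n) s + (vac_even s)%:Z)%R.
Proof.
rewrite /twist_sum /vac_even /count_at Posz_sum_nat -big_split /=.
apply: eq_bigr => t _; rewrite /alphaH2 /alphaG2 /twisted /fw.
by case: odd; case: nth; rewrite /= ?addr0 ?add0r.
Qed.

Lemma twist_sum_alphaG2S n s :
  twist_sum (alphaG2 n.+1) s =
  (twist_sum (alphaG2 n) s - (vac_even s)%:Z + (hor_odd s)%:Z)%R.
Proof.
rewrite /twist_sum /vac_even /hor_odd /count_at !Posz_sum_nat -sumrB -!big_split /=.
apply: eq_bigr => t _; rewrite /alphaG2 /twisted /fw.
by case: odd; case: nth => /=; lia.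
Qed.

Lemma twist_sum_alphaH2S n s :
  twist_sum (alphaH2 n.+1) s =
  (twist_sum (alphaH2 n) s - (vac_even s)%:Z + (hor_odd s)%:Z)%R.
Proof.
rewrite /twist_sum /vac_even /hor_odd /count_at !Posz_sum_nat -sumrB -!big_split /=.
apply: eq_bigr => t _; rewrite /alphaH2 /twisted /fw.
by case: odd; case: nth => /=; lia.
Qed.

Lemma seq_term_rcons_false_x1 n s : size s = n.*2 ->
  tmul (seq_term (alphaG2 n) (rcons s false)) (unit_term 0 (1, 0, 0, 0)%R)
  = tmul (tmul (unit_term 1 0%R) (seq_term (alphaH2 n) s)) (unit_term 0 (0, 0, 1, 0)%R).
Proof.
move=> size_s; have := hor_even_vac_even s.
rewrite /seq_term /seq_nu twist_sum_alphaH2 twist_sum_rcons /hor_odd /hor_even /vac_even.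
rewrite !count_at_rcons size_rcons size_s /twisted /= odd_double uphalf_double half_double.
have -> : alphaG2 n n.*2 = n by rewrite /alphaG2 /fw odd_double -mul2n /=; lia.
rewrite /tmul /lam /vadd /unit_term /= => he_ve.
congr (_, (_, (_, _, _, _))); lia.
Qed.

Lemma seq_term_rcons01_x1 n s : size s = n.*2.+1 ->
  tmul (seq_term (alphaG2 n.+1) (rcons01 s)) (unit_term 0 (1, 0, 0, 0)%R)
  = tmul (seq_term (alphaG2 n) s) (unit_term 0 (0, 1, 0, 0)%R).
Proof.
move=> size_s; have := hor_even_vac_even s.
rewrite /seq_term /seq_nu /rcons01 !twist_sum_rcons twist_sum_alphaG2S /hor_odd /hor_even /vac_even.
rewrite !count_at_rcons !size_rcons size_s /twisted /= !odd_double ?uphalf_double ?half_double.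
rewrite /tmul /lam /vadd /unit_term /= => he_ve.
congr (_, (_, (_, _, _, _))); lia.
Qed.

Lemma x2_seq_term_rcons_false n s : size s = n.*2.+1 ->
  tmul (unit_term 0 (0, 1, 0, 0)%R) (seq_term (alphaH2 n.+1) (rcons s false))
  = seq_term (alphaG2 n) s.
Proof.
move=> size_s; have := hor_even_vac_even s.
rewrite /seq_term /seq_nu twist_sum_rcons twist_sum_alphaH2S twist_sum_alphaH2 /hor_odd /hor_even.
rewrite /vac_even !count_at_rcons !size_rcons size_s /twisted /= !odd_double.
rewrite ?uphalf_double ?half_double /tmul /lam /vadd /unit_term /= => he_ve.
congr (_, (_, (_, _, _, _))); lia.
Qed.

Lemma x2_seq_term_rcons01 n s : size s = n.*2 ->
  tmul (unit_term 0 (0, 1, 0, 0)%R) (seq_term (alphaH2 n.+1) (rcons01 s))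
  = tmul (tmul (unit_term (-1) 0%R) (unit_term 0 (1, 0, 1, 1)%R)) (seq_term (alphaH2 n) s).
Proof.
move=> size_s; have := hor_even_vac_even s.
rewrite /seq_term /seq_nu /rcons01 !twist_sum_rcons twist_sum_alphaH2S /hor_odd /hor_even /vac_even.
rewrite !count_at_rcons !size_rcons size_s /twisted /alphaH2 /fw /= !odd_double.
rewrite ?uphalf_double ?half_double /tmul /lam /vadd /unit_term /= => he_ve.
congr (_, (_, (_, _, _, _))); lia.
Qed.

Lemma qmul_seq1r X y : qmul X [:: y] = map (tmul^~ y) X.
Proof. by elim: X => //= x X; rewrite /qmul /= => ->. Qed.

Lemma qmul_seq1l x Y : qmul [:: x] Y = map (tmul x) Y.
Proof. by rewrite /qmul /= cats0. Qed.

Lemma perm_qeq X Y : perm_eq X Y -> qeq X Y.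
Proof. by move=> pXY k a; rewrite /qcoef (perm_big _ pXY). Qed.

Lemma perm_r n : perm_eq (r n) [seq seq_term (alphaG2 n) s | s <- enum_indep n.*2.+1].
Proof. by apply: perm_snake_sum; rewrite /= odd_double. Qed.

Lemma perm_s n : perm_eq (s n) [seq seq_term (alphaH2 n) s | s <- enum_indep n.*2].
Proof. by apply: perm_snake_sum; rewrite odd_double. Qed.

Lemma enum_indep_size k s : s \in enum_indep k -> size s = k.
Proof. by case/mem_enum_indep. Qed.

Lemma r_x1_recursion n :
  qeq (qmul (r n.+1) x1) (qadd (qmul (qmul qhalf (s n.+1)) y1) (qmul (r n) x2)).
Proof.
apply: perm_qeq; rewrite /qadd /x1 /x2 /y1 /qhalf /M /mono !qmul_seq1r qmul_seq1l.
rewrite (permPl (perm_map _ (perm_r n.+1))).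
rewrite (permPr (perm_cat (perm_map _ (perm_map _ (perm_s n.+1))) (perm_map _ (perm_r n)))).
rewrite doubleS enum_indepSS !map_cat -!map_comp.
apply: perm_cat; apply: perm_map_eq_in => b /enum_indep_size size_b.
- exact: seq_term_rcons_false_x1.
- exact: seq_term_rcons01_x1.
Qed.

Lemma x2_s_recursion n :
  qeq (qmul x2 (s n.+1))
      (qadd (r n) (qmul (qmul qmhalf (M (1, 0, 1, 1)%R)) (s n))).
Proof.
apply: perm_qeq; rewrite /qadd /x2 /qmhalf /M /mono !qmul_seq1l.
rewrite (permPl (perm_map _ (perm_s n.+1))).
rewrite (permPr (perm_cat (perm_r n) (perm_map _ (perm_s n)))).
rewrite doubleS enum_indepSS !map_cat -!map_comp.
apply: perm_cat; apply: perm_map_eq_in => b /enum_indep_size size_b.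
- exact: x2_seq_term_rcons_false.
- exact: x2_seq_term_rcons01.
Qed.

Unset Implicit Arguments.

Theorem mainTheorem7 (n : nat) (hn : (1 <= n)%N) :
  qeq (qmul (r n) x1) (qadd (qmul (qmul qhalf (s n)) y1) (qmul (r n.-1) x2))
  /\
  qeq (qmul x2 (s n))
      (qadd (r n.-1) (qmul (qmul qmhalf (M (1, 0, 1, 1)%R)) (s n.-1))).
Proof.
case: n hn => // n _.
exact: (conj (r_x1_recursion n) (x2_s_recursion n)).
Qed.
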